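(* Let $k\ge 4$, $n=2k-1$, and $\lambda\in\overline{\mathcal{U}}_{T_n}$. Then the Young diagram $\mathrm{KN}(S_\lambda)$ has exactly $3n-3$ cells; consequently the sum of the hook lengths of the cells on its main diagonal is $3n-3$.
   Context: A partition of $N$ into distinct parts is a sequence $\lambda=(\lambda_1<\dots<\lambda_t)$ of positive integers with sum $N$ and $t\ge 2$, identified with its set of parts. Missing parts: $\mathcal{M}_\lambda=\{1,\dots,\lambda_t\}\setminus\lambda$. $\lambda$ is refinable if two distinct missing parts sum to a part of $\lambda$, unrefinable otherwise; $\mathcal{U}_N$ is the set of unrefinable partitions of $N$. An element of $\mathcal{U}_N$ is maximal if its largest part is the maximum of the largest parts of elements of $\mathcal{U}_N$; $\widetilde{\mathcal{U}}_N$ is the set of these and $\overline{\mathcal{U}}_N=\{\lambda\in\widetilde{\mathcal{U}}_N:\#\mathcal{M}_\lambda=\lfloor\lambda_t/2\rfloor\}$. $T_n=n(n+1)/2$. $S_\lambda=\mathbb{N}_0\setminus\lambda$. The Keith–Nath transformation sends a set $S\subseteq\mathbb{N}_0$ with $0\in S$ and finite complement to the Young diagram $\mathrm{KN}(S)$ whose boundary is the lattice path that, starting at the origin, takes for $j=0,1,\dots,\max(\mathbb{N}_0\setminus S)$ an east step if $j\in S$ and a north step otherwise (the region between this path, the vertical axis and the horizontal line at the path's final height). Diagrams are in English convention; the hook length of a cell is (cells to its right in its row) + (cells below it in its column) + 1; the main diagonal consists of the cells in row $i$ and column $i$. *)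

From mathcomp Require Import all_boot.
Set Implicit Arguments. Unset Strict Implicit. Unset Printing Implicit Defensive.

(* A partition of N into distinct parts, represented by the strictly increasing
   sequence of its parts lambda_1 < ... < lambda_t (identified with its set of parts). *)
Definition distinct_partition (N : nat) (la : seq nat) : bool :=
  [&& sorted ltn la, all (fun x => 0 < x) la, sumn la == N & 2 <= size la].

Definition largest_part (la : seq nat) : nat := last 0 la.

Definition missing_parts (la : seq nat) : seq nat :=
  [seq m <- iota 1 (largest_part la) | m \notin la].

Definition refinable (la : seq nat) : bool :=
  has (fun a => has (fun b => (a != b) && (a + b \in la)) (missing_parts la))
      (missing_parts la).

Definition unrefinable_partition (N : nat) (la : seq nat) : Prop :=
  distinct_partition N la /\ ~~ refinable la.

Definition maximal_unrefinable (N : nat) (la : seq nat) : Prop :=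
  unrefinable_partition N la /\
  forall mu, unrefinable_partition N mu -> largest_part mu <= largest_part la.

Definition Ubar (N : nat) (la : seq nat) : Prop :=
  maximal_unrefinable N la /\ size (missing_parts la) = (largest_part la)./2.

Definition T (n : nat) : nat := n * n.+1 %/ 2.

Definition S_lambda (la : seq nat) : pred nat := fun j => j \notin la.

(* Keith--Nath transformation of S (with 0 in S and finite complement whose
   maximum is m): the lattice path from the origin, for j = 0..m, takes an
   east step if j \in S and a north step otherwise.  [true] = north step. *)
Definition KN_path (S : pred nat) (m : nat) : seq bool :=
  [seq ~~ S j | j <- iota 0 m.+1].

(* Row lengths of the region between the path, the vertical axis and the
   horizontal line at the final height: the row just left of the i-th north
   step has length = number of east steps before it.  Listed from the bottom. *)
Definition KN_rows_bottom_up (p : seq bool) : seq nat :=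
  [seq count negb (take i p) | i <- iota 0 (size p) & nth false p i].

Definition KN_shape (S : pred nat) (m : nat) : seq nat :=
  rev (KN_rows_bottom_up (KN_path S m)).

(* Cells (row, column), 0-indexed, English convention. *)
Definition cells (sh : seq nat) : seq (nat * nat) :=
  [seq (r, c) | r <- iota 0 (size sh), c <- iota 0 (nth 0 sh r)].

Definition hook_length (sh : seq nat) (x : nat * nat) : nat :=
  let: (r, c) := x in
  (nth 0 sh r - c.+1) + count (fun r' => c < nth 0 sh r') (iota r.+1 (size sh - r.+1)) + 1.

Definition diagonal_cells (sh : seq nat) : seq (nat * nat) :=
  [seq x <- cells sh | x.1 == x.2].

Definition diagonal_hook_sum (sh : seq nat) : nat :=
  sumn [seq hook_length sh x | x <- diagonal_cells sh].

(* KN(S_lambda): max (N_0 \ S_lambda) = max lambda = largest part. *)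
Definition KN_of_partition (la : seq nat) : seq nat :=
  KN_shape (S_lambda la) (foldr maxn 0 la).

(* Let t be the number of parts and L the largest part of lambda.  The partition
   {1, ..., n-3, n+1, 2n-4} of T_n is unrefinable, so L >= 2n-4, and
   #M_lambda = L - t = floor(L/2) gives t = ceil(L/2) >= n-2.  Conversely t <= n-2:
   t >= n would push the sum of the parts above T_n, while for t = n-1 the parts
   below L lie in {1, ..., n} and the two numbers of {1, ..., n} they miss are
   missing parts adding up to L.  The row of KN(S_lambda) attached to a part p has
   p - #{q in lambda | q < p} cells, so the diagram has T_n - C(n-2, 2) = 3n-3
   cells; finally, in any Young diagram the hooks of the diagonal cells partition
   the diagram. *)

From mathcomp Require Import all_boot zify.

Set Implicit Arguments.
Unset Strict Implicit.
Unset Printing Implicit Defensive.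

Lemma sorted_ltn_rcons (s : seq nat) x :
  sorted ltn (rcons s x) = all (ltn^~ x) s && sorted ltn s.
Proof. by rewrite !(sorted_pairwise ltn_trans) pairwise_rcons. Qed.

Lemma sorted_ltn_le_last (s : seq nat) y : sorted ltn s -> y \in s -> y <= last 0 s.
Proof.
case/lastP: s => // s x; rewrite sorted_ltn_rcons last_rcons mem_rcons in_cons.
by case/andP=> s_lt_x _ /predU1P[-> // | /(allP s_lt_x)/ltnW].
Qed.

Lemma perm_complement (T : eqType) (s r : seq T) :
  uniq s -> uniq r -> {subset s <= r} -> perm_eq (s ++ [seq x <- r | x \notin s]) r.
Proof.
move=> s_uniq r_uniq s_r; rewrite perm_sym -(perm_filterC (mem s) r) perm_cat2r.
apply: uniq_perm => // [|x]; first exact: filter_uniq.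
by rewrite mem_filter andb_idr //; apply: s_r.
Qed.

Lemma count_mem_sym (T : eqType) (s r : seq T) :
  uniq s -> uniq r -> count (mem s) r = count (mem r) s.
Proof.
move=> s_uniq r_uniq; rewrite -!size_filter; apply/perm_size/uniq_perm.
- exact: filter_uniq.
- exact: filter_uniq.
- by move=> x; rewrite !mem_filter andbC.
Qed.

Lemma bin2S n : 'C(n.+1, 2) = 'C(n, 2) + n.
Proof. by rewrite binS bin1. Qed.

Lemma T_bin2 n : T n = 'C(n.+1, 2).
Proof. by rewrite /T bin2 -divn2 mulnC. Qed.

Lemma sumn_iota1 n : sumn (iota 1 n) = 'C(n.+1, 2).
Proof. by rewrite sumnE -bin2_sum big_ltn // add0n /index_iota subn1. Qed.

Lemma leq_sumn_path_ltn a s : path ltn a s -> a * size s + 'C((size s).+1, 2) <= sumn s.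
Proof.
elim: s a => [|x s IHs] a /=; first by rewrite muln0.
by case/andP=> a_lt_x /IHs; rewrite [in X in _ -> X]binS bin1; nia.
Qed.

Lemma leq_sumn_path_ltn0_last s : path ltn 0 s -> 'C(size s, 2) + last 0 s <= sumn s.
Proof.
case/lastP: s => // s x; rewrite rcons_path size_rcons last_rcons sumn_rcons.
by case/andP=> /leq_sumn_path_ltn; rewrite mul0n add0n => s_ge _; rewrite leq_add2r.
Qed.

Lemma sumn_count_ltn (s : seq nat) :
  sorted ltn s -> sumn [seq count (ltn^~ p) s | p <- s] = 'C(size s, 2).
Proof.
elim/last_ind: s => // s x IHs; rewrite sorted_ltn_rcons => /andP[s_lt_x s_sorted].
rewrite map_rcons sumn_rcons size_rcons bin2S -IHs //; congr (sumn _ + _).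
  apply/eq_in_map => p /(allP s_lt_x) p_lt_x.
  by rewrite -cats1 count_cat /= (leq_gtF (ltnW p_lt_x)); exact: addn0.
rewrite all_count in s_lt_x.
by rewrite -cats1 count_cat /= ltnn (eqP s_lt_x); exact: addn0.
Qed.

Lemma size_cells sh : size (cells sh) = sumn sh.
Proof.
rewrite /cells size_allpairs_dep (eq_map (fun r => size_iota 0 (nth 0 sh r))).
by rewrite -/(mkseq _ _) mkseq_nth.
Qed.

Lemma diagonal_cellsE sh :
  diagonal_cells sh = [seq (r, r) | r <- iota 0 (size sh) & r < nth 0 sh r].
Proof.
rewrite /diagonal_cells /cells; elim: (iota 0 (size sh)) => //= r rs IHrs.
rewrite filter_cat IHrs filter_map (eq_filter (a2 := pred1 r)) => [|c]; last first.
  by rewrite /= eq_sym.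
case: ifP => [r_lt | r_ge]; first by rewrite filter_pred1_uniq ?iota_uniq ?mem_iota.
rewrite (eq_in_filter (a2 := pred0)) ?filter_pred0 // => c.
rewrite mem_iota add0n => /andP[_ c_lt].
by apply/negbTE; apply: contraFN r_ge => /eqP c_r; rewrite c_r in c_lt.
Qed.

Lemma nth_predn (s : seq nat) r : nth 0 (map predn s) r = (nth 0 s r).-1.
Proof.
have [r_lt | r_ge] := ltnP r (size s); first by rewrite (nth_map 0).
by rewrite !nth_default ?size_map.
Qed.

Lemma hook_length_cons_diag a s r :
  hook_length (a :: s) (r.+1, r.+1) = hook_length (map predn s) (r, r).
Proof.
rewrite /hook_length /= size_map nth_predn subSS (iotaDl 1) count_map.
congr (_ + _ + _); first lia.
by apply: eq_count => r' /=; rewrite nth_predn; case: (nth 0 s r').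
Qed.

Lemma hook_length_corner a s :
  hook_length (a.+1 :: s) (0, 0) = a.+1 + count (fun x => 0 < x) s.
Proof.
rewrite /hook_length /= subn1 (iotaDl 1 0) count_map subn1 /=.
rewrite -[in RHS](mkseq_nth 0 s) /mkseq count_map addn1 addSn.
by congr (a + _).+1; apply: eq_count => r /=; rewrite add1n.
Qed.

Local Arguments hook_length : simpl never.

Lemma diagonal_hook_sum_cons a s :
  diagonal_hook_sum (a.+1 :: s)
  = a.+1 + count (fun x => 0 < x) s + diagonal_hook_sum (map predn s).
Proof.
rewrite /diagonal_hook_sum !diagonal_cellsE size_map /= (iotaDl 1 0).
rewrite filter_map -!map_comp hook_length_corner; congr (_ + sumn _).
rewrite (eq_filter (a2 := fun r => r < nth 0 (map predn s) r)) => [|r].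
  by apply: eq_map => r /=; rewrite hook_length_cons_diag.
by rewrite /= nth_predn; case: (nth 0 s r).
Qed.

Lemma sumn_predn s : sumn (map predn s) + count (fun x => 0 < x) s = sumn s.
Proof. by elim: s => //= -[|x] s IHs /=; lia. Qed.

Lemma diagonal_hook_sum_eq_sumn sh :
  sorted geq sh -> diagonal_hook_sum sh = sumn sh.
Proof.
have [m] := ubnP (size sh); elim: m sh => // m IHm [|[|a] s] //= s_lt sh_sorted.
- have /all_pred1P s_eq : all (pred1 0) s.
    apply/allP => x /(allP (order_path_min (rev_trans leq_trans) sh_sorted)).
    by rewrite /= leqn0.
  rewrite /diagonal_hook_sum diagonal_cellsE s_eq sumn_nseq.
  rewrite (eq_filter (a2 := pred0)) ?filter_pred0 // => r.
  by rewrite -[0 :: _]/(nseq (size s).+1 0) nth_nseq if_same.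
- rewrite diagonal_hook_sum_cons IHm ?size_map //; first by have := sumn_predn s; lia.
  have : sorted geq s := path_sorted sh_sorted.
  by apply: homo_sorted => x y /=; lia.
Qed.

Lemma KN_of_partitionE la : sorted ltn la ->
  KN_of_partition la = rev [seq count (S_lambda la) (iota 0 p) | p <- la].
Proof.
move=> la_sorted; rewrite /KN_of_partition /KN_shape; congr rev.
set m := foldr maxn 0 la.
have le_m : {in la, forall p, p <= m}.
  by move=> p p_la; rewrite /m foldrE leq_bigmax_seq.
rewrite /KN_rows_bottom_up /KN_path size_map size_iota.
rewrite (eq_in_filter (a2 := mem la)) => [|j]; last first.
  by rewrite mem_iota add0n => j_lt; rewrite (nth_map 0) ?size_iota // nth_iota // negbK.
have -> : [seq j <- iota 0 m.+1 | j \in la] = la.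
  apply: (irr_sorted_eq ltn_trans ltnn) => //.
    exact/sorted_filter/iota_ltn_sorted/ltn_trans.
  by move=> j; rewrite mem_filter mem_iota add0n ltnS andb_idr // => /le_m.
apply/eq_in_map => p /le_m p_le; rewrite -map_take take_iota count_map.
by rewrite (minn_idPl (leqW p_le)); apply: eq_count => j /=; rewrite negbK.
Qed.

Lemma KN_of_partition_sorted la : sorted ltn la -> sorted geq (KN_of_partition la).
Proof.
move=> la_sorted; rewrite KN_of_partitionE // rev_sorted.
apply: homo_sorted la_sorted => p q /ltnW/subnKC <-.
by rewrite iotaD count_cat; apply: leq_addr.
Qed.

Lemma sumn_KN_of_partition la : sorted ltn la ->
  sumn (KN_of_partition la) + 'C(size la, 2) = sumn la.
Proof.
move=> la_sorted; have la_uniq := sorted_uniq ltn_trans ltnn la_sorted.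
rewrite KN_of_partitionE // sumn_rev -sumn_count_ltn // !sumnE !big_map -big_split.
apply: eq_bigr => p _; rewrite -[RHS](size_iota 0 p) -(count_predC (mem la)) addnC.
congr (_ + _); rewrite count_mem_sym ?iota_uniq //.
by apply: eq_count => q; rewrite [RHS]mem_iota.
Qed.

Lemma size_missing_parts la :
  path ltn 0 la -> size (missing_parts la) = largest_part la - size la.
Proof.
rewrite path_sortedE; last exact: ltn_trans.
case/andP=> la_pos la_sorted; have la_uniq := sorted_uniq ltn_trans ltnn la_sorted.
have la_sub : {subset la <= iota 1 (largest_part la)}.
  move=> y y_la; rewrite mem_iota add1n ltnS; apply/andP; split.
    exact: (allP la_pos).
  exact: sorted_ltn_le_last.
have := perm_size (perm_complement la_uniq (iota_uniq _ _) la_sub).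
by rewrite size_cat size_iota => <-; rewrite addKn.
Qed.

Lemma refinable_rcons_complement n B L :
  uniq B -> {subset B <= iota 1 n} -> (size B).+2 = n -> n < L ->
  sumn B + L = 'C(n.+1, 2) -> refinable (rcons B L).
Proof.
move=> B_uniq B_sub B_size n_lt_L B_sum.
have B_perm := perm_complement B_uniq (iota_uniq 1 n) B_sub.
set C := [seq m <- iota 1 n | m \notin B] in B_perm.
have C_size : size C = 2.
  by move: (perm_size B_perm); rewrite size_cat size_iota; lia.
have C_sum : sumn C = L by move: (perm_sumn B_perm); rewrite sumn_cat sumn_iota1; lia.
have C_uniq : uniq C := filter_uniq _ (iota_uniq 1 n).
have C_missing : {subset C <= missing_parts (rcons B L)}.
  move=> c; rewrite mem_filter mem_iota => /andP[c_B /andP[c_ge1 c_le_n]].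
  rewrite /missing_parts /largest_part last_rcons mem_filter mem_rcons in_cons.
  rewrite (negbTE c_B) orbF mem_iota c_ge1 /=; apply/andP; split; [apply/eqP|]; lia.
clear B_perm; clearbody C; case: C C_size C_sum C_uniq C_missing => [|c [|d []]] //= _.
rewrite addn0 inE andbT => cd_L c_d C_missing.
apply/hasP; exists c; first by apply: C_missing; rewrite mem_head.
apply/hasP; exists d; first by apply: C_missing; rewrite !inE eqxx orbT.
by rewrite c_d cd_L mem_rcons mem_head.
Qed.

Lemma unrefinable_size_le n la :
  4 <= n -> path ltn 0 la -> sumn la = 'C(n.+1, 2) -> ~~ refinable la ->
  (size la).*2 <= (largest_part la).+1 -> size la <= n - 2.
Proof.
move=> n_ge4 la_path la_sum la_unref size_le.
have la_bound := leq_sumn_path_ltn0_last la_path.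
case/lastP: la la_path la_sum la_unref size_le la_bound => // B L.
rewrite rcons_path size_rcons /largest_part last_rcons sumn_rcons.
case/andP=> B_path _ B_sum la_unref size_le la_bound.
rewrite leqNgt; apply: contra la_unref => n_lt.
have B_size : (size B).+2 = n.
  apply/eqP; rewrite eqn_leq andbC ltnNge; apply/andP; split; first lia.
  by apply/negP => /(leq_bin2l 2); rewrite bin2S in B_sum; lia.
have L_gt : n < L by lia.
apply: (refinable_rcons_complement _ _ B_size L_gt B_sum).
  by have := sorted_uniq ltn_trans ltnn (path_sorted B_path).
have B_last := leq_sumn_path_ltn0_last B_path.
rewrite -B_size !bin2S in B_sum.
move=> y y_B; rewrite mem_iota add1n ltnS; apply/andP; split.
  exact: (allP (order_path_min ltn_trans B_path)).
by apply: leq_trans (sorted_ltn_le_last (path_sorted B_path) y_B) _; lia.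
Qed.

Lemma maximal_unrefinable_largest_part_ge n la :
  6 <= n -> maximal_unrefinable 'C(n.+1, 2) la -> 2 * n - 4 <= largest_part la.
Proof.
move=> n_ge6 [_ la_max]; have [m n_eq] : exists m, n = m.+3 by exists (n - 3); lia.
pose mu := iota 1 m ++ [:: n.+1; 2 * n - 4].
have mu_largest : largest_part mu = 2 * n - 4 by rewrite /largest_part last_cat.
have mu_path : path ltn 0 mu.
  have iota_path : path ltn 0 (iota 1 m) := iota_ltn_sorted 0 m.+1.
  rewrite /mu cat_path iota_path /= andbT.
  have := mem_last 0 (iota 1 m); rewrite -[0 :: _]/(iota 0 m.+1) mem_iota.
  by case/andP=> _ last_lt; apply/andP; split; [apply: leq_trans last_lt _|]; lia.
have mu_le x : x \in mu -> x <= 2 * n - 4.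
  by rewrite -mu_largest; apply: sorted_ltn_le_last (path_sorted mu_path).
rewrite -mu_largest; apply: la_max; split.
  move: (mu_path); rewrite path_sortedE => [/andP[mu_pos mu_sorted]|]; last exact: ltn_trans.
  rewrite /distinct_partition mu_sorted mu_pos sumn_cat sumn_iota1 size_cat size_iota /=.
  by rewrite n_eq !bin2S; apply/andP; split; [apply/eqP|]; lia.
apply/hasPn => a; rewrite mem_filter mem_iota => /andP[a_mu /andP[a_ge1 _]].
apply/hasPn => b; rewrite mem_filter mem_iota => /andP[b_mu /andP[b_ge1 _]].
apply/negP => /andP[/eqP a_b /mu_le ab_le].
move: a_mu b_mu; rewrite !mem_cat !mem_iota !negb_or => /andP[a_iota _] /andP[b_iota _].
lia.
Qed.

Theorem proposition3p9 (k : nat) (hk : 4 <= k) (la : seq nat) :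
  Ubar (T (2 * k - 1)) la ->
  size (cells (KN_of_partition la)) = 3 * (2 * k - 1) - 3 /\
  diagonal_hook_sum (KN_of_partition la) = 3 * (2 * k - 1) - 3.
Proof.
rewrite T_bin2; set n := 2 * k - 1; have n_ge7 : 7 <= n by lia.
move=> [la_max la_missing]; have [[la_part la_unref] _] := la_max.
case/and4P: la_part => la_sorted la_pos /eqP la_sum _.
have la_path : path ltn 0 la by rewrite path_sortedE ?la_sorted ?andbT //; exact: ltn_trans.
have L_ge : 2 * n - 4 <= largest_part la.
  by apply: maximal_unrefinable_largest_part_ge la_max; lia.
have size_eq := size_missing_parts la_path; rewrite la_missing in size_eq.
have size_le : size la <= n - 2.
  by apply: unrefinable_size_le la_path la_sum la_unref _; lia.
have size_la : size la = n - 2 by lia.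
rewrite size_cells diagonal_hook_sum_eq_sumn ?KN_of_partition_sorted //.
have := sumn_KN_of_partition la_sorted; rewrite la_sum size_la.
have -> : n.+1 = (n - 2).+3 by lia.
by rewrite !bin2S => shape_sum; split; lia.
Qed.
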